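(* Let $\mathbb{A}$ be a finite subset of a Euclidean space $\mathbb{R}^n$, and let $\mathbb{A}^{\mathcal B}$ be the set of minimal combinations of $\mathbb{A}$. If $\beta \in \mathbb{A}^{\mathcal B}$ and $\beta \notin \mathbb{A}$, then there exists an affinely independent subset $S \subset \mathbb{A}$ with $\sharp(S) \geq 2$ such that $\beta$ is the nearest point from the origin $0$ to the convex polytope $\mathcal{C}(S)$ generated by $S$, and $\beta$ lies in the relative interior of $\mathcal{C}(S)$.
   Context: For a finite nonempty set $S \subset \mathbb{R}^n$, $\mathcal{C}(S)$ denotes its convex hull, and $\tau(S)$ denotes the unique point of $\mathcal{C}(S)$ of minimal Euclidean norm (the nearest point of $\mathcal{C}(S)$ to the origin). The set of minimal combinations of a finite set $\mathbb{A}$ is $\mathbb{A}^{\mathcal B} = \{\tau(S) : S \subset \mathbb{A},\ S \neq \varnothing\}$. $\sharp(S)$ denotes the cardinality of $S$. For an affinely independent set $S = \{x_1,\dots,x_s\}$, the relative interior of $\mathcal{C}(S)$ is $\{\sum_{i=1}^s \lambda_i x_i : \sum_i \lambda_i = 1,\ \lambda_1,\dots,\lambda_s > 0\}$. *)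

From HB Require Import structures.
From mathcomp Require Import all_boot all_order all_algebra.
From mathcomp Require Import finmap.
Set Implicit Arguments. Unset Strict Implicit. Unset Printing Implicit Defensive.
Import Order.TTheory GRing.Theory Num.Theory.
Local Open Scope ring_scope.
Local Open Scope fset_scope.

Section Defs.
Variables (R : rcfType) (n : nat).
Notation V := 'rV[R]_n.

Definition enorm (x : V) : R := Num.sqrt (\sum_(i < n) x ord0 i ^+ 2).

Definition in_conv (S : {fset V}) (x : V) : Prop :=
  exists w : V -> R, (forall y, y \in S -> 0 <= w y) /\
    \sum_(y <- S) w y = 1 /\ x = \sum_(y <- S) w y *: y.

Definition is_tau (S : {fset V}) (b : V) : Prop :=
  in_conv S b /\ forall y, in_conv S y -> enorm b <= enorm y.

Definition minimal_combination (A : {fset V}) (b : V) : Prop :=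
  exists S : {fset V}, [/\ S `<=` A, S != fset0 & is_tau S b].

Definition affinely_independent (S : {fset V}) : Prop :=
  forall w : V -> R, \sum_(y <- S) w y = 0 -> \sum_(y <- S) w y *: y = 0 ->
    forall y, y \in S -> w y = 0.

Definition in_relint (S : {fset V}) (x : V) : Prop :=
  exists w : V -> R, (forall y, y \in S -> 0 < w y) /\
    \sum_(y <- S) w y = 1 /\ x = \sum_(y <- S) w y *: y.
End Defs.

From mathcomp Require Import all_boot all_order all_algebra.
From mathcomp Require Import finmap.
From Stdlib Require Import Classical.
Set Implicit Arguments. Unset Strict Implicit. Unset Printing Implicit Defensive.
Import Order.TTheory GRing.Theory Num.Theory.
Local Open Scope ring_scope.
Local Open Scope fset_scope.

(** If b = tau(S0) for some S0 within A, write b as a convex combination of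
    points of S0 and shrink the support as in Caratheodory's theorem: a zero
    weight lets us drop a point, and an affine dependence v lets us move along
    w - t v until some weight vanishes. The process stops at an affinely
    independent S with b in its relative interior; b is still the nearest
    point of C(S), since C(S) lies in C(S0) and contains b; and S has at least
    two points because b is not in A. *)

Section ConvexHull.
Variables (R : rcfType) (n : nat).
Notation V := 'rV[R]_n.
Implicit Types (S T : {fset V}) (b : V).

Lemma in_conv_subset S T b : T `<=` S -> in_conv T b -> in_conv S b.
Proof.
move=> TS [w [w0 [w1 wb]]].
exists (fun z => if z \in T then w z else 0); split; [|split].
- by move=> z _; case: ifP => // /w0.
- rewrite -(big_fset_incl _ TS); last by move=> x _ /negbTE ->.
  by rewrite -w1 big_seq [RHS]big_seq; apply: eq_bigr => z ->.
- rewrite -(big_fset_incl _ TS); last by move=> x _ /negbTE ->; rewrite scale0r.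
  by rewrite wb big_seq [RHS]big_seq; apply: eq_bigr => z ->.
Qed.

Lemma in_relint_conv S b : in_relint S b -> in_conv S b.
Proof. by case=> w [w0 wS]; exists w; split=> // z /w0 /ltW. Qed.

Lemma in_conv_fsetD1 T (w : V -> R) b y : y \in T -> w y = 0 ->
  (forall z, z \in T -> 0 <= w z) -> \sum_(z <- T) w z = 1 ->
  b = \sum_(z <- T) w z *: z -> in_conv (T `\ y) b.
Proof.
move=> yT wy0 w0 w1 wb; exists w; split; [|split].
- by move=> z /fsetD1P [_ /w0].
- by rewrite -w1 (big_fsetD1 _ yT) /= wy0 add0r.
- by rewrite wb (big_fsetD1 _ yT) /= wy0 scale0r add0r.
Qed.

Lemma in_conv_card_le1 S b : in_conv S b -> (#|` S| <= 1)%N -> b \in S.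
Proof.
case=> w [_ [w1 wb]]; rewrite leq_eqVlt ltnS leqn0 orbC.
case/orP=> [/eqP/cardfs0_eq S0 | /cardfs1P [a Sa]].
  by move: w1; rewrite S0 big_seq_fset0 => /esym/eqP; rewrite oner_eq0.
by move: w1 wb; rewrite Sa !big_seq_fset1 => ->; rewrite scale1r => ->; apply: fset11.
Qed.

Lemma is_tau_subset S T b : T `<=` S -> is_tau S b -> in_conv T b -> is_tau T b.
Proof. by move=> TS [_ bmin] bT; split=> // y /(in_conv_subset TS); apply: bmin. Qed.

Lemma affine_dependence_of_not_independent S : ~ affinely_independent S ->
  exists v : V -> R, [/\ \sum_(z <- S) v z = 0, \sum_(z <- S) v z *: z = 0 &
    exists2 y, y \in S & 0 < v y].
Proof.
move=> Sdep; apply: NNPP => Snodep; apply: Sdep => w w0 w1 y yS.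
case: (ltgtP (w y) 0) => // wy; exfalso; apply: Snodep.
- exists (fun z => - w z); split; last by exists y; rewrite ?oppr_gt0.
  + by rewrite sumrN w0 oppr0.
  + by under eq_bigr do rewrite scaleNr; rewrite sumrN w1 oppr0.
- by exists w; split=> //; exists y.
Qed.

Lemma in_conv_fsetD1_of_dependence T (w v : V -> R) b y :
  (forall z, z \in T -> 0 < w z) -> \sum_(z <- T) w z = 1 ->
  b = \sum_(z <- T) w z *: z ->
  \sum_(z <- T) v z = 0 -> \sum_(z <- T) v z *: z = 0 ->
  y \in T -> 0 < v y -> exists2 y0, y0 \in T & in_conv (T `\ y0) b.
Proof.
move=> wpos w1 wb v0 v1 yT vy.
pose ratio (z : T) := w (val z) / v (val z).
case: (@arg_minP _ _ _ [` yT] (fun z : T => 0 < v (val z)) ratio vy).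
move=> [y0 y0T] /= vy0 y0min; set t := ratio _ in y0min.
(* t is the largest step keeping w - t v nonnegative on T; it kills w at y0. *)
have t_ge0 : 0 <= t by rewrite divr_ge0 // ltW // wpos.
exists y0 => //; apply: (@in_conv_fsetD1 _ (fun z => w z - t * v z)) => //.
- by rewrite /t /ratio /= divfK ?subrr // gt_eqF.
- move=> z zT; have [vz|vz] := ltP 0 (v z).
    by have := y0min [` zT] vz; rewrite /ratio /= ler_pdivlMr // subr_ge0.
  by rewrite subr_ge0 (le_trans _ (ltW (wpos z zT))) // mulr_ge0_le0.
- by rewrite sumrB -mulr_sumr v0 mulr0 subr0.
- under eq_bigr do rewrite scalerBl -scalerA.
  by rewrite sumrB -scaler_sumr v1 scaler0 subr0.
Qed.

Lemma in_conv_shrink T b : in_conv T b ->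
  (affinely_independent T /\ in_relint T b) \/
  exists2 y, y \in T & in_conv (T `\ y) b.
Proof.
case=> w [w0 [w1 wb]].
have [/hasP [y yT /eqP wy] | /hasPn wnz] := boolP (has (fun z => w z == 0) T).
  by right; exists y => //; apply: in_conv_fsetD1 wy w0 w1 wb.
have wpos z : z \in T -> 0 < w z by move=> zT; rewrite lt_def wnz ?w0.
have [Tind | /affine_dependence_of_not_independent [v [v0 v1 [y yT vy]]]] :=
  classic (affinely_independent T); first by left; split=> //; exists w.
by right; apply: in_conv_fsetD1_of_dependence wpos w1 wb v0 v1 yT vy.
Qed.

Lemma caratheodory_relint T b : in_conv T b ->
  exists T', [/\ T' `<=` T, affinely_independent T' & in_relint T' b].
Proof.
have [k] := ubnP #|` T|; elim: k T => // k IH T Tk.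
case/in_conv_shrink => [[Tind Tb] | [y yT bTy]].
  by exists T; rewrite fsubset_refl.
have [|T' [T'Ty T'ind T'b]] := IH (T `\ y) _ bTy.
  by move: Tk; rewrite (cardfsD1 y) yT.
by exists T'; split=> //; apply: fsubset_trans T'Ty (fsubD1set _ _).
Qed.

End ConvexHull.

Theorem theorem1 (R : rcfType) (n : nat) (A : {fset 'rV[R]_n}) (b : 'rV[R]_n) :
  minimal_combination A b -> b \notin A ->
  exists S : {fset 'rV[R]_n},
    [/\ S `<=` A, (2 <= #|` S|)%N, affinely_independent S,
        is_tau S b & in_relint S b].
Proof.
move=> [S0 [S0A _ S0tau]] bA.
have [S [SS0 Sind Sb]] := caratheodory_relint S0tau.1.
have SA := fsubset_trans SS0 S0A.
have Sconv := in_relint_conv Sb.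
exists S; split=> //; last exact: is_tau_subset SS0 S0tau Sconv.
rewrite leqNgt ltnS; apply: contra bA => /(in_conv_card_le1 Sconv).
exact: (fsubsetP SA).
Qed.
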